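(* Let the numbers $a,k,n,s$ satisfy $k\geq 2$, $s\geq 1$ and $n-s\geq 4k^3+4|a|(k-1)$. Let the real sequence $x_0,\ldots,x_s$ satisfy \[ x_0\geq \frac{k-1}{2}+\sqrt{kn-a} \] and \[ x_{i+1}\geq x_i\left(1-\frac{1}{x_i^2/(k-1)+n-i-k}\right)\quad\text{for } 0\leq i<s. \] Then for every $i=1,\ldots,s$, \[ x_i\geq\frac{k-1}{2}+\sqrt{k(n-i)-a+1/2}. \] *)

From Stdlib Require Import Reals Lra Lia.

(* Write c = (k-1)/2, m = n - i and B = (k-1)(m-k). The recursion says
   x_(i+1) >= f(x_i) with f(z) = z - (k-1) z / (z^2 + B), and f(X) <= f(x)
   whenever X <= x and xX >= B. So it suffices to push the lower bound
   X = c + r, r = sqrt(km - a + d), through f (d = 0 for the initial bound,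
   d = 1/2 afterwards), i.e. to show (k-1) X / (X^2 + B) <= r - r' with
   r' = sqrt(k(m-1) - a + 1/2). Since r^2 - r'^2 >= k - 1/2, we have r - r' >= (k - 1/2)/(2r), and the
   remaining polynomial inequality holds because m is large compared with
   k^3 and |a|. *)
From Stdlib Require Import Reals Lra Lia Psatz.
Open Scope R_scope.

Definition step_map (k B z : R) : R := z - (k - 1) * z / (z ^ 2 + B).

Lemma recursion_step_map (k m z : R) : 1 < k -> 0 < m - k -> 0 < z ->
  z * (1 - 1 / (z ^ 2 / (k - 1) + m - k)) = step_map k ((k - 1) * (m - k)) z.
Proof.
  intros Hk Hm Hz; unfold step_map.
  assert (0 < z ^ 2 + (k - 1) * (m - k)) by nra.
  replace (z ^ 2 / (k - 1) + m - k) with ((z ^ 2 + (k - 1) * (m - k)) / (k - 1))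
    by (field; lra).
  field; lra.
Qed.

(* step_map x - step_map X = (x - X) (1 + (k-1)(xX - B) / ((x^2+B)(X^2+B))). *)
Lemma step_map_monotone (k B X x : R) : 1 <= k -> 0 < B -> 0 < X <= x ->
  B <= x * X -> step_map k B X <= step_map k B x.
Proof.
  intros Hk HB HX HxX; unfold step_map.
  assert (Hx2 : 0 < x ^ 2 + B) by nra.
  assert (HX2 : 0 < X ^ 2 + B) by nra.
  assert (Hdiff : (k - 1) * X / (X ^ 2 + B) - (k - 1) * x / (x ^ 2 + B)
    = (k - 1) * (x - X) * (x * X - B) / ((x ^ 2 + B) * (X ^ 2 + B)))
    by (field; lra).
  assert (0 <= (k - 1) * (x - X) * (x * X - B) / ((x ^ 2 + B) * (X ^ 2 + B))).
  { apply Rmult_le_pos; [apply Rmult_le_pos; [apply Rmult_le_pos|]; lra|].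
    apply Rlt_le, Rinv_0_lt_compat; nra. }
  lra.
Qed.

Lemma sub_le_sqrt_sub_sqrt (u v : R) : 0 <= v <= u ->
  u - v <= 2 * sqrt u * (sqrt u - sqrt v).
Proof.
  intros Hv.
  pose proof (sqrt_pos v) as Hsv.
  assert (Hle : sqrt v <= sqrt u) by (apply sqrt_le_1_alt; lra).
  assert (Hsq : u - v = (sqrt u - sqrt v) * (sqrt u + sqrt v)).
  { rewrite Rsqr_minus_plus, !Rsqr_sqrt; lra. }
  rewrite Hsq; nra.
Qed.

Lemma drift_bound (k m a d r : R) : 2 <= k -> 0 <= d <= 1/2 ->
  m - 1 >= 4 * k ^ 3 + 4 * Rabs a * (k - 1) -> 0 <= r -> r ^ 2 = k * m - a + d ->
  2 * (k - 1) * r * ((k - 1) / 2 + r)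
    <= (k - 1/2) * (((k - 1) / 2 + r) ^ 2 + (k - 1) * (m - k)).
Proof.
  intros Hk Hd Hm Hr Hr2.
  assert (Ha : - Rabs a <= a <= Rabs a).
  { pose proof (Rle_abs a); pose proof (Rle_abs (- a)); rewrite Rabs_Ropp in *; lra. }
  (* Eliminating m through k m = r^2 + a - d, the r^2 terms leave only r^2/2. *)
  assert (Hid : k * ((k - 1/2) * (((k - 1) / 2 + r) ^ 2 + (k - 1) * (m - k))
                     - 2 * (k - 1) * r * ((k - 1) / 2 + r))
     = r ^ 2 / 2 + k * (k - 1) * r / 2 + k * (k - 1/2) * (k - 1) ^ 2 / 4
       + (k - 1/2) * (k - 1) * (a - d) - (k - 1/2) * k ^ 2 * (k - 1)).
  { replace a with (k * m + d - r ^ 2) by lra. field. }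
  assert (0 <= r ^ 2 / 2 + k * (k - 1) * r / 2 + k * (k - 1/2) * (k - 1) ^ 2 / 4
               + (k - 1/2) * (k - 1) * (a - d) - (k - 1/2) * k ^ 2 * (k - 1)).
  { rewrite Hr2.
    assert (0 <= (k - 1/2) * (k - 1) * (a - d + Rabs a + 1/2)) by (apply Rmult_le_pos; nra).
    assert (0 <= Rabs a * (k ^ 2 - k / 2 - 1)) by (apply Rmult_le_pos; nra).
    assert (0 <= k * (k - 1) * r) by (apply Rmult_le_pos; nra).
    nra. }
  nra.
Qed.

Lemma lower_bound_step (k m a d x y : R) : 2 <= k -> 0 <= d <= 1/2 ->
  m - 1 >= 4 * k ^ 3 + 4 * Rabs a * (k - 1) ->
  x >= (k - 1) / 2 + sqrt (k * m - a + d) ->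
  y >= x * (1 - 1 / (x ^ 2 / (k - 1) + m - k)) ->
  y >= (k - 1) / 2 + sqrt (k * (m - 1) - a + 1/2).
Proof.
  intros Hk Hd Hm Hx Hy.
  pose proof (Rabs_pos a) as HA.
  assert (Ha : - Rabs a <= a <= Rabs a).
  { pose proof (Rle_abs a); pose proof (Rle_abs (- a)); rewrite Rabs_Ropp in *; lra. }
  assert (Hmk : m >= 1 + k + 4 * Rabs a).
  { assert (k <= k ^ 3) by (simpl; nra).
    assert (Rabs a <= Rabs a * (k - 1)) by nra.
    lra. }
  set (u := k * m - a + d) in *.
  set (v := k * (m - 1) - a + 1/2).
  set (r := sqrt u) in *.
  set (X := (k - 1) / 2 + r) in *.
  set (B := (k - 1) * (m - k)).
  assert (Hu : 0 < u) by (unfold u; nra).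
  assert (Hv : 0 <= v <= u) by (unfold u, v; nra).
  assert (Hr : 0 < r) by apply sqrt_lt_R0, Hu.
  assert (Hr2 : r ^ 2 = u) by (unfold r; rewrite <- Rsqr_pow2; apply Rsqr_sqrt; lra).
  assert (HB : 0 < B) by (unfold B; nra).
  assert (HX : 0 < X) by (unfold X; lra).
  assert (HBu : B <= u) by (unfold B, u; nra).
  assert (HXB : B <= X * X) by (unfold X; nra).
  assert (HX2 : 0 < X ^ 2 + B) by nra.
  assert (Hdrift : (k - 1) * X / (X ^ 2 + B) <= sqrt u - sqrt v).
  { assert (Huv : (k - 1/2) * (X ^ 2 + B) <= (u - v) * (X ^ 2 + B))
      by (apply Rmult_le_compat_r; unfold u, v; lra).
    assert (Hgap : (u - v) * (X ^ 2 + B) <= 2 * r * (sqrt u - sqrt v) * (X ^ 2 + B))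
      by (apply Rmult_le_compat_r; [lra | apply sub_le_sqrt_sub_sqrt; lra]).
    pose proof (drift_bound k m a d r Hk Hd Hm (Rlt_le _ _ Hr) Hr2) as Hpoly.
    apply (Rmult_le_reg_r (2 * r * (X ^ 2 + B))); [nra|].
    replace ((k - 1) * X / (X ^ 2 + B) * (2 * r * (X ^ 2 + B)))
      with (2 * (k - 1) * r * X) by (field; lra).
    fold X B in Hpoly; nra. }
  rewrite recursion_step_map in Hy by lra; fold B in Hy.
  assert (step_map k B X <= step_map k B x) by (apply step_map_monotone; nra).
  assert ((k - 1) / 2 + sqrt v <= step_map k B X) by (unfold step_map, X, r in *; lra).
  lra.
Qed.

Theorem lemma4 (a : R) (k n s : nat) (x : nat -> R)
  (hk : (2 <= k)%nat) (hs : (1 <= s)%nat)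
  (hn : INR n - INR s >= 4 * INR k ^ 3 + 4 * Rabs a * (INR k - 1))
  (h0 : x 0%nat >= (INR k - 1) / 2 + sqrt (INR k * INR n - a))
  (hrec : forall i : nat, (i < s)%nat ->
     x (S i) >= x i * (1 - 1 / (x i ^ 2 / (INR k - 1) + INR n - INR i - INR k))) :
  forall i : nat, (1 <= i <= s)%nat ->
    x i >= (INR k - 1) / 2 + sqrt (INR k * (INR n - INR i) - a + 1 / 2).
Proof.
  assert (Hk : 2 <= INR k) by (apply (le_INR 2) in hk; simpl in hk; lra).
  assert (Hstep : forall i d, (i < s)%nat -> 0 <= d <= 1/2 ->
     x i >= (INR k - 1) / 2 + sqrt (INR k * (INR n - INR i) - a + d) ->
     x (S i) >= (INR k - 1) / 2 + sqrt (INR k * (INR n - INR (S i)) - a + 1 / 2)).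
  { intros i d Hi Hd Hx.
    assert (HSi : INR i + 1 <= INR s) by (rewrite <- S_INR; apply le_INR; lia).
    rewrite S_INR.
    replace (INR n - (INR i + 1)) with (INR n - INR i - 1) by ring.
    apply (lower_bound_step _ _ _ d (x i)); [lra | lra | lra | exact Hx |].
    replace (x i ^ 2 / (INR k - 1) + (INR n - INR i) - INR k)
      with (x i ^ 2 / (INR k - 1) + INR n - INR i - INR k) by ring.
    exact (hrec i Hi). }
  intros i [Hi1 His]; induction i as [|[|i] IH]; [lia| |].
  - apply (Hstep 0%nat 0); [lia | lra |].
    rewrite INR_0, Rminus_0_r, Rplus_0_r; exact h0.
  - apply (Hstep (S i) (1/2)); [lia | lra | apply IH; lia].
Qed.
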